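(* Let $\Lambda_1,\Lambda_2,\Lambda_3,\Lambda_4\subset\mathbb{R}^3$ be the lattices spanned over $\mathbb{Z}$ by the rows of, respectively, $$\begin{bmatrix}2&1&1\\1&2&-1\\-2&2&2\end{bmatrix},\ \begin{bmatrix}1&2&1\\-1&1&2\\2&-2&2\end{bmatrix},\ \begin{bmatrix}1&1&2\\2&-1&1\\2&2&-2\end{bmatrix},\ \begin{bmatrix}2&-1&-1\\-1&2&-1\\2&2&2\end{bmatrix}.$$ Each $\Lambda_i$ is congruent to $\sqrt3A_2\oplus\sqrt{12}\,\mathbb{Z}$, and $\Lambda_1\cap\Lambda_2\cap\Lambda_3\cap\Lambda_4$ is the face-centered cubic lattice spanned by $(3,3,0)$, $(3,-3,0)$, $(0,3,-3)$.
   Context: A lattice is spanned by the rows of a matrix if it is the set of all integer linear combinations of those rows. $A_2$ denotes the planar hexagonal lattice with minimal norm $2$ (norm = squared length), so that $\sqrt3A_2\oplus\sqrt{12}\,\mathbb{Z}$ has Gram matrix $\begin{bmatrix}6&-3&0\\-3&6&0\\0&0&12\end{bmatrix}$. Two lattices are congruent if one is mapped to the other by an element of $SO(3)$. *)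

From HB Require Import structures.
From mathcomp Require Import all_boot all_order all_algebra.
Set Implicit Arguments. Unset Strict Implicit. Unset Printing Implicit Defensive.
Import Order.TTheory GRing.Theory Num.Theory.
Local Open Scope ring_scope.

Definition mx3 (R : ringType) (a b c d e f g h k : R) : 'M[R]_3 :=
  \matrix_(i < 3, j < 3)
    nth 0 (nth [::] [:: [:: a; b; c]; [:: d; e; f]; [:: g; h; k]] i) j.

Definition lattice (R : numDomainType) (B : 'M[R]_3) (v : 'rV[R]_3) : Prop :=
  exists c : 'rV[int]_3, v = map_mx (fun z : int => z%:~R) c *m B.

Definition congruent (R : numDomainType) (L1 L2 : 'rV[R]_3 -> Prop) : Prop :=
  exists Q : 'M[R]_3,
    Q *m Q^T = 1%:M /\ \det Q = 1 /\
    (forall w, L2 w <-> exists v, L1 v /\ w = v *m Q).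

(* A concrete realization of sqrt3 A_2 (+) sqrt12 Z: basis rows
   (sqrt6,0,0), (-sqrt6/2, 3 sqrt2/2, 0), (0,0,sqrt12), whose Gram matrix is
   [[6,-3,0],[-3,6,0],[0,0,12]]. *)
Definition A2Z_basis (R : rcfType) : 'M[R]_3 :=
  mx3 (Num.sqrt 6) 0 0
      (- Num.sqrt 6 / 2) (3 * Num.sqrt 2 / 2) 0
      0 0 (Num.sqrt 12).

Definition sqrt3A2_sqrt12Z (R : rcfType) : 'rV[R]_3 -> Prop :=
  lattice (A2Z_basis R).

Definition intmx3 (R : numDomainType) (a b c d e f g h k : int) : 'M[R]_3 :=
  mx3 a%:~R b%:~R c%:~R d%:~R e%:~R f%:~R g%:~R h%:~R k%:~R.

Definition Lambda1 (R : numDomainType) := lattice (intmx3 R 2 1 1 1 2 (-1) (-2) 2 2).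
Definition Lambda2 (R : numDomainType) := lattice (intmx3 R 1 2 1 (-1) 1 2 2 (-2) 2).
Definition Lambda3 (R : numDomainType) := lattice (intmx3 R 1 1 2 2 (-1) 1 2 2 (-2)).
Definition Lambda4 (R : numDomainType) := lattice (intmx3 R 2 (-1) (-1) (-1) 2 (-1) 2 2 2).
Definition FCC (R : numDomainType) := lattice (intmx3 R 3 3 0 3 (-3) 0 0 3 (-3)).

Arguments Lambda1 R : clear implicits.
Arguments Lambda2 R : clear implicits.
Arguments Lambda3 R : clear implicits.
Arguments Lambda4 R : clear implicits.
Arguments FCC R : clear implicits.
Arguments sqrt3A2_sqrt12Z R : clear implicits.
Arguments A2Z_basis R : clear implicits.

(* Each basis B_i of Lambda_i has integer Gram matrix U A A^T U^T and determinant
   18 = det (U A), where A is the basis of sqrt3 A_2 (+) sqrt12 Z and U is the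
   sign change diag(1, s, s) (s = -1 for i <= 3, s = 1 for i = 4).  Hence
   Q = B_i^-1 U A is orthogonal with det Q = 1, maps Lambda_i onto the lattice of
   U A, and that lattice is the lattice of A because U is unimodular.
   The FCC basis is an integer combination of each B_i.  Conversely, already
   Lambda_1 /\ Lambda_2 lies in FCC: there are integer matrices K_1 + K_2 = 1
   with B_j K_j in Z^{3x3} F, so v = v K_1 + v K_2 is in Z^3 F for v in both. *)

From mathcomp Require Import all_boot all_order all_algebra.
From mathcomp Require Import ring lra.
Import GRing.Theory Num.Theory.
Set Implicit Arguments. Unset Strict Implicit. Unset Printing Implicit Defensive.
Local Open Scope ring_scope.

Local Notation intmx := (map_mx (fun z : int => z%:~R)).

Section Mx3.
Variable R : nzRingType.

Lemma map_mx3 (S : nzRingType) (f : R -> S) (a b c d e f' g h k : R) :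
  map_mx f (mx3 a b c d e f' g h k) =
  mx3 (f a) (f b) (f c) (f d) (f e) (f f') (f g) (f h) (f k).
Proof. by apply/matrixP => -[[|[|[|//]]] ?] -[[|[|[|//]]] ?]; rewrite !mxE. Qed.

Lemma trmx_mx3 (a b c d e f g h k : R) :
  (mx3 a b c d e f g h k)^T = mx3 a d g b e h c f k.
Proof. by apply/matrixP => -[[|[|[|//]]] ?] -[[|[|[|//]]] ?]; rewrite !mxE. Qed.

Lemma scalar_mx3 (a : R) : a%:M = mx3 a 0 0 0 a 0 0 0 a.
Proof. by apply/matrixP => -[[|[|[|//]]] ?] -[[|[|[|//]]] ?]; rewrite !mxE. Qed.

Lemma addmx_mx3 (a b c d e f g h k a' b' c' d' e' f' g' h' k' : R) :
  mx3 a b c d e f g h k + mx3 a' b' c' d' e' f' g' h' k' =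
  mx3 (a + a') (b + b') (c + c') (d + d') (e + e') (f + f') (g + g') (h + h') (k + k').
Proof. by apply/matrixP => -[[|[|[|//]]] ?] -[[|[|[|//]]] ?]; rewrite !mxE. Qed.

Lemma mulmx_mx3 (a b c d e f g h k a' b' c' d' e' f' g' h' k' : R) :
  mx3 a b c d e f g h k *m mx3 a' b' c' d' e' f' g' h' k' =
  mx3 (a * a' + b * d' + c * g') (a * b' + b * e' + c * h') (a * c' + b * f' + c * k')
      (d * a' + e * d' + f * g') (d * b' + e * e' + f * h') (d * c' + e * f' + f * k')
      (g * a' + h * d' + k * g') (g * b' + h * e' + k * h') (g * c' + h * f' + k * k').
Proof.
apply/matrixP => -[[|[|[|//]]] ?] -[[|[|[|//]]] ?];
by rewrite !mxE !big_ord_recl big_ord0 !mxE /= addr0 addrA.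
Qed.

End Mx3.

Lemma det_mx3 (R : comNzRingType) (a b c d e f g h k : R) :
  \det (mx3 a b c d e f g h k) =
  a * (e * k - f * h) - b * (d * k - f * g) + c * (d * h - e * g).
Proof.
rewrite (expand_det_row _ ord0) !big_ord_recl big_ord0 /cofactor /=.
rewrite !(expand_det_row _ ord0) !big_ord_recl !big_ord0 /cofactor /= !det_mx11 !mxE /=.
ring.
Qed.

Lemma intmx3E (R : numDomainType) (a b c d e f g h k : int) :
  intmx3 R a b c d e f g h k = intmx (mx3 a b c d e f g h k).
Proof. by rewrite map_mx3. Qed.

Lemma lattice_sub (R : numDomainType) (F B : 'M[R]_3) (M : 'M[int]_3) :
  F = intmx M *m B -> forall v, lattice F v -> lattice B v.
Proof. by move=> -> v [c ->]; exists (c *m M); rewrite map_mxM mulmxA. Qed.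

Lemma lattice_meet_sub (R : numDomainType) (B1 B2 F : 'M[R]_3) (K1 K2 N1 N2 : 'M[int]_3) :
  K1 + K2 = 1%:M -> B1 *m intmx K1 = intmx N1 *m F -> B2 *m intmx K2 = intmx N2 *m F ->
  forall v, lattice B1 v -> lattice B2 v -> lattice F v.
Proof.
move=> K12 BK1 BK2 v [c1 v1] [c2 v2]; exists (c1 *m N1 + c2 *m N2).
have -> : v = v *m intmx K1 + v *m intmx K2.
  by rewrite -mulmxDr -map_mxD K12 map_scalar_mx rmorph1 mulmx1.
by rewrite {1}v1 {}v2 -!mulmxA BK1 BK2 map_mxD !map_mxM mulmxDl !mulmxA.
Qed.

Lemma lattice_mulmx_unimodular (R : numDomainType) (U : 'M[int]_3) (A : 'M[R]_3) v :
  U \in unitmx -> lattice (intmx U *m A) v <-> lattice A v.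
Proof.
move=> Uunit; split=> -[c ->].
  by exists (c *m U); rewrite map_mxM mulmxA.
exists (c *m invmx U).
by rewrite mulmxA -map_mxM -mulmxA mulVmx // mulmx1.
Qed.

Lemma congruent_lattice (R : numFieldType) (B A : 'M[R]_3) :
  B \in unitmx -> B *m B^T = A *m A^T -> \det B = \det A ->
  congruent (lattice B) (lattice A).
Proof.
move=> Bunit gramBA detBA; exists (invmx B *m A); split; [|split].
- rewrite trmx_mul mulmxA -(mulmxA _ A) -gramBA !mulmxA mulVmx // mul1mx.
  by rewrite -trmx_mul mulVmx // trmx1.
- by rewrite det_mulmx det_inv -detBA mulVr // -unitmxE.
- have BQ : B *m (invmx B *m A) = A by rewrite mulmxA mulmxV // mul1mx.
  move=> w; split=> [[c ->] | [_ [[c ->] ->]]].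
    by exists (intmx c *m B); split; [exists c | rewrite -mulmxA BQ].
  by exists c; rewrite -mulmxA BQ.
Qed.

Lemma congruent_lattice_unimodular (R : numFieldType) (B A : 'M[R]_3) (U : 'M[int]_3) :
  U \in unitmx -> B \in unitmx ->
  B *m B^T = (intmx U *m A) *m (intmx U *m A)^T -> \det B = \det (intmx U *m A) ->
  congruent (lattice B) (lattice A).
Proof.
move=> Uunit Bunit gramB detB.
have [Q [QQT [detQ imQ]]] := congruent_lattice Bunit gramB detB.
by exists Q; split; [|split] => // w; rewrite -imQ lattice_mulmx_unimodular.
Qed.

Definition A2Z_gram : 'M[int]_3 := mx3 6 (-3) 0 (-3) 6 0 0 0 12.

Section A2Z.
Variable R : rcfType.

Lemma A2Z_basis_gram : A2Z_basis R *m (A2Z_basis R)^T = intmx A2Z_gram.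
Proof.
have := sqr_sqrtr (ler0n R 2); have := sqr_sqrtr (ler0n R 6).
have := sqr_sqrtr (ler0n R 12).
rewrite /A2Z_basis trmx_mx3 mulmx_mx3 map_mx3 => s12 s6 s2.
by congr mx3; nra.
Qed.

Lemma det_A2Z_basis : \det (A2Z_basis R) = 18.
Proof.
have sqrt_prod : Num.sqrt 6 * Num.sqrt 2 * Num.sqrt 12 = 12 :> R.
  by rewrite -sqrtrM // -natrM -expr2 sqr_sqrtr.
rewrite /A2Z_basis det_mx3; lra.
Qed.

Lemma congruent_sqrt3A2_sqrt12Z (B U : 'M[int]_3) :
  \det U = 1 -> \det B = 18 -> B *m B^T = U *m A2Z_gram *m U^T ->
  congruent (lattice (intmx B : 'M[R]_3)) (sqrt3A2_sqrt12Z R).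
Proof.
move=> detU detB gramB; have detU' : \det (intmx U : 'M[R]_3) = 1.
  by rewrite det_map_mx detU.
apply: (@congruent_lattice_unimodular _ _ _ U).
- by rewrite unitmxE detU unitr1.
- by rewrite unitmxE det_map_mx detB unitfE intr_eq0.
- rewrite !trmx_mul mulmxA -(mulmxA _ (A2Z_basis R)) A2Z_basis_gram.
  by rewrite !map_trmx -!map_mxM gramB.
- by rewrite det_map_mx det_mulmx detU' mul1r det_A2Z_basis detB.
Qed.

End A2Z.

Theorem mainTheorem4 (R : rcfType) :
  congruent (Lambda1 R) (sqrt3A2_sqrt12Z R) /\
  congruent (Lambda2 R) (sqrt3A2_sqrt12Z R) /\
  congruent (Lambda3 R) (sqrt3A2_sqrt12Z R) /\
  congruent (Lambda4 R) (sqrt3A2_sqrt12Z R) /\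
  (forall v : 'rV[R]_3,
     (Lambda1 R v /\ Lambda2 R v /\ Lambda3 R v /\ Lambda4 R v) <-> FCC R v).
Proof.
rewrite /Lambda1 /Lambda2 /Lambda3 /Lambda4 /FCC !intmx3E.
pose flip23 : 'M[int]_3 := mx3 1 0 0 0 (-1) 0 0 0 (-1).
split; [|split; [|split; [|split]]].
- by apply: (congruent_sqrt3A2_sqrt12Z _ (U := flip23)); rewrite ?det_mx3 ?trmx_mx3 ?mulmx_mx3.
- by apply: (congruent_sqrt3A2_sqrt12Z _ (U := flip23)); rewrite ?det_mx3 ?trmx_mx3 ?mulmx_mx3.
- by apply: (congruent_sqrt3A2_sqrt12Z _ (U := flip23)); rewrite ?det_mx3 ?trmx_mx3 ?mulmx_mx3.
- apply: (congruent_sqrt3A2_sqrt12Z _ (U := 1%:M)).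
  + exact: det1.
  + by rewrite det_mx3.
  + by rewrite trmx1 mul1mx mulmx1 trmx_mx3 mulmx_mx3.
- move=> v; split=> [[in1 [in2 _]] | inF].
  + apply: (lattice_meet_sub (K1 := mx3 (-1) (-1) (-1) 0 1 0 2 1 2)
             (K2 := mx3 2 1 1 0 0 0 (-2) (-1) (-1))
             (N1 := mx3 0 0 0 (-1) 0 1 3 (-1) (-2)) (N2 := mx3 0 0 0 (-2) 0 1 0 0 0)) in1 in2;
    by rewrite ?addmx_mx3 ?scalar_mx3 -?map_mxM ?mulmx_mx3.
  + split; [|split; [|split]];
      [apply: (lattice_sub (M := mx3 1 1 0 1 (-1) (-1) (-1) 2 0)) inF
      |apply: (lattice_sub (M := mx3 2 (-1) 0 0 (-1) 1 1 (-1) (-1))) inF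
      |apply: (lattice_sub (M := mx3 1 0 1 (-1) 2 0 0 (-1) 1)) inF
      |apply: (lattice_sub (M := mx3 1 1 1 1 (-1) 0 1 2 0)) inF];
    by rewrite -map_mxM mulmx_mx3.
Qed.
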